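(* Let $A$ be a finite alphabet, $k \ge 1$, and let $f, g : A^* \to \mathbb{N}$ be $k$-repetitive. Then $f+g$ and the Hadamard product $f \cdot g$ (defined by $(f\cdot g)(w) = f(w)g(w)$) are $k$-repetitive.
   Context: For $k \ge 1$, a function $f : A^* \to \mathbb{N}$ is $k$-repetitive if there exists an integer $\omega_0 \ge 1$ such that for all words $\alpha, \beta, \alpha_0, u_1, \alpha_1, \dots, u_k, \alpha_k \in A^*$ and every positive multiple $\omega$ of $\omega_0$, setting $W(Z_1,\dots,Z_k) = \alpha_0 \prod_{i=1}^k u_i^{\omega Z_i} \alpha_i$ and $w = W(1,\dots,1)$, there exists a function $F : \mathbb{N}^k \to \mathbb{N}$ such that for all integers $X_1,\dots,X_k,Y_1,\dots,Y_k \ge 3$, $f(\alpha\, w^{2\omega-1} W(X_1,\dots,X_k)\, w^{\omega-1}\, W(Y_1,\dots,Y_k)\, w^{\omega}\, \beta) = F(X_1+Y_1, \dots, X_k+Y_k)$. *)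

From mathcomp Require Import all_boot.
Set Implicit Arguments. Unset Strict Implicit. Unset Printing Implicit Defensive.

Definition wpow (A : Type) (u : seq A) (n : nat) : seq A := flatten (nseq n u).

(* W(Z_1,...,Z_k) = alpha_0 u_1^{omega Z_1} alpha_1 ... u_k^{omega Z_k} alpha_k,
   with alpha_0 = a0, u_i = u i, alpha_i = a i  (i : 'I_k, 0-indexed). *)
Definition Wword (A : Type) (k : nat) (a0 : seq A) (u a : 'I_k -> seq A)
  (omega : nat) (Z : 'I_k -> nat) : seq A :=
  a0 ++ flatten [seq wpow (u i) (omega * Z i) ++ a i | i <- enum 'I_k].

Definition repetitive (A : finType) (k : nat) (f : seq A -> nat) : Prop :=
  exists omega0 : nat, 1 <= omega0 /\
  forall (alpha beta a0 : seq A) (u a : 'I_k -> seq A) (omega : nat),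
    0 < omega -> omega0 %| omega ->
    let W := Wword a0 u a omega in
    let w := W (fun _ => 1) in
    exists F : ('I_k -> nat) -> nat,
      forall X Y : 'I_k -> nat,
        (forall i, 3 <= X i) -> (forall i, 3 <= Y i) ->
        f (alpha ++ wpow w (2 * omega - 1) ++ W X ++ wpow w (omega - 1)
              ++ W Y ++ wpow w omega ++ beta)
        = F (fun i => X i + Y i).

From mathcomp Require Import all_boot.

(* If f and g are repetitive with periods o1 and o2, both are repetitive for
   every multiple of o1 * o2, so on the words of the definition h (f w) (g w)
   is given by h (F1 s) (F2 s) with s = X + Y. *)

Lemma repetitive_map2 (A : finType) (k : nat) (h : nat -> nat -> nat)
    (f g : seq A -> nat) :
  repetitive k f -> repetitive k g -> repetitive k (fun w => h (f w) (g w)).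
Proof.
move=> [o1 [o1_gt0 rep_f]] [o2 [o2_gt0 rep_g]].
exists (o1 * o2); split; first by rewrite muln_gt0 o1_gt0 o2_gt0.
move=> alpha beta a0 u a omega omega_gt0 dvd_omega /=.
have [F1 F1E] := rep_f alpha beta a0 u a omega omega_gt0
  (dvdn_trans (dvdn_mulr o2 (dvdnn o1)) dvd_omega).
have [F2 F2E] := rep_g alpha beta a0 u a omega omega_gt0
  (dvdn_trans (dvdn_mull o1 (dvdnn o2)) dvd_omega).
exists (fun s => h (F1 s) (F2 s)) => X Y X_ge3 Y_ge3.
by rewrite F1E // F2E.
Qed.

Theorem mainTheorem3 (A : finType) (k : nat) (f g : seq A -> nat) :
  1 <= k -> repetitive k f -> repetitive k g ->
  repetitive k (fun w => f w + g w) /\ repetitive k (fun w => f w * g w).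
Proof.
(* The closure properties hold for every k, including k = 0. *)
move=> _ rep_f rep_g.
by split; apply: repetitive_map2.
Qed.
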